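(* Let $n\ge 1$, let $\beta\in[0,1)$, let $B_0\in\mathbb{R}^{n\times n}$ be symmetric positive definite, and let $P_f\in\mathbb{R}^{n\times n}$ be symmetric positive semidefinite and rank deficient. Let $B=(1-\beta)B_0+\beta P_f$. Then \[ \max\left[\frac{1}{\kappa(B_0)}+\frac{\beta\lambda_1(P_f)}{(1-\beta)\lambda_1(B_0)},\ \left(\frac{1}{\kappa(B_0)}+\frac{\beta\lambda_1(P_f)}{(1-\beta)\lambda_1(B_0)}\right)^{-1}\right]\le \kappa(B)\le \kappa(B_0)\left(1+\frac{\beta\lambda_1(P_f)}{(1-\beta)\lambda_1(B_0)}\right). \]
   Context: For a symmetric matrix $A\in\mathbb{R}^{n\times n}$, $\lambda_k(A)$ denotes its $k$-th largest eigenvalue ($\lambda_1$ largest, $\lambda_n$ smallest). For a symmetric positive definite matrix $A$, the condition number is $\kappa(A)=\lambda_1(A)/\lambda_n(A)$. *)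

From mathcomp Require Import all_boot all_order all_algebra.
From mathcomp.real_closed Require Import polyrcf.
Set Implicit Arguments. Unset Strict Implicit. Unset Printing Implicit Defensive.
Import Order.TTheory GRing.Theory Num.Theory.
Local Open Scope ring_scope.

Section Defs.
Variable R : rcfType.

Definition symmetric_mx n (A : 'M[R]_n) : Prop := A^T = A.

Definition spd_mx n (A : 'M[R]_n) : Prop :=
  symmetric_mx A /\ forall x : 'rV[R]_n, x != 0 -> 0 < (x *m A *m x^T) 0 0.

Definition spsd_mx n (A : 'M[R]_n) : Prop :=
  symmetric_mx A /\ forall x : 'rV[R]_n, 0 <= (x *m A *m x^T) 0 0.

Definition rank_deficient n (A : 'M[R]_n) : Prop := (\rank A < n)%N.

(* the (distinct) real eigenvalues of A, i.e. the real roots of its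
   characteristic polynomial, sorted increasingly *)
Definition real_spectrum n (A : 'M[R]_n) : seq R := rootsR (char_poly A).

(* lambda_1(A): largest eigenvalue; lambda_n(A): smallest eigenvalue
   (for symmetric A all eigenvalues are real) *)
Definition lambda_max n (A : 'M[R]_n) : R := last 0 (real_spectrum A).
Definition lambda_min n (A : 'M[R]_n) : R := head 0 (real_spectrum A).

Definition cond_num n (A : 'M[R]_n) : R := lambda_max A / lambda_min A.
End Defs.

(* The estimates all come from the Rayleigh bounds
   lambda_n(A) |x|^2 <= x A x^T <= lambda_1(A) |x|^2 for symmetric A, applied to
   B = (1 - beta) B0 + beta Pf.  Used for every x they give the Weyl-type bounds
   lambda_1(B) <= (1 - beta) lambda_1(B0) + beta lambda_1(Pf) and
   lambda_n(B) >= (1 - beta) lambda_n(B0); used at an eigenvector for lambda_1(Pf),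
   lambda_1(B0) or lambda_n(B0) they give the three matching bounds the other way,
   and used at a vector of the kernel of the rank-deficient Pf they give
   lambda_n(B) <= (1 - beta) lambda_1(B0).  Dividing the bounds on lambda_1(B) by
   those on lambda_n(B) yields the three inequalities on kappa(B). *)

From mathcomp Require Import all_boot all_order all_algebra.
From mathcomp.real_closed Require Import polyrcf complex.
From mathcomp Require Import sesquilinear spectral.
From mathcomp Require Import ring.
Import Order.TTheory GRing.Theory Num.Theory.
Local Open Scope ring_scope.

Set Implicit Arguments. Unset Strict Implicit. Unset Printing Implicit Defensive.

Section SortedBounds.
Variables (disp : Order.disp_t) (T : orderType disp) (x0 : T) (s : seq T).
Hypothesis s_sorted : sorted <%O s.

Lemma lt_sorted_head_le x : x \in s -> (head x0 s <= x)%O.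
Proof.
move=> xs; have ixs : (index x s < size s)%N by rewrite index_mem.
rewrite -nth0 -(nth_index x0 xs) lt_sorted_leq_nth // inE.
exact: leq_ltn_trans ixs.
Qed.

Lemma lt_sorted_le_last x : x \in s -> (x <= last x0 s)%O.
Proof.
move=> xs; have ixs : (index x s < size s)%N by rewrite index_mem.
have s_gt0 : (0 < size s)%N by exact: leq_ltn_trans ixs.
rewrite -nth_last -(nth_index x0 xs) lt_sorted_leq_nth // ?inE ?prednK //.
by rewrite -ltnS prednK.
Qed.

End SortedBounds.

Section RealSpectrum.
Variables (R : rcfType) (n : nat) (A : 'M[R]_n).

Lemma mem_real_spectrum r : (r \in real_spectrum A) = root (char_poly A) r.
Proof.
by rewrite /real_spectrum -(roots_on_rootsR (monic_neq0 (char_poly_monic A))).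
Qed.

Lemma lambda_min_le_root r : root (char_poly A) r -> lambda_min A <= r.
Proof. by rewrite -mem_real_spectrum; apply: lt_sorted_head_le; apply: sorted_roots. Qed.

Lemma root_le_lambda_max r : root (char_poly A) r -> r <= lambda_max A.
Proof. by rewrite -mem_real_spectrum; apply: lt_sorted_le_last; apply: sorted_roots. Qed.

Lemma root_lambda_min r : root (char_poly A) r -> root (char_poly A) (lambda_min A).
Proof.
rewrite -!mem_real_spectrum /lambda_min.
by case: (real_spectrum A) => // ? ? _; apply: mem_head.
Qed.

Lemma root_lambda_max r : root (char_poly A) r -> root (char_poly A) (lambda_max A).
Proof.
rewrite -!mem_real_spectrum /lambda_max.
by case: (real_spectrum A) => // ? ? _ /=; apply: mem_last.
Qed.

End RealSpectrum.

Section QuadraticForm.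
Variables (R : rcfType) (n : nat).

Definition qform (A : 'M[R]_n) (x : 'rV[R]_n) : R := (x *m A *m x^T) 0 0.
Definition sqnorm (x : 'rV[R]_n) : R := (x *m x^T) 0 0.

Lemma sqnorm_gt0 x : x != 0 -> 0 < sqnorm x.
Proof.
move=> x_neq0; have sq_ge0 j : 0 <= x 0 j * x^T j 0 by rewrite mxE -expr2 sqr_ge0.
rewrite /sqnorm mxE lt_def sumr_ge0 // andbT psumr_eq0 //.
apply: contra x_neq0 => /allP x0; apply/eqP/rowP => j.
by have := x0 j (mem_index_enum j); rewrite !mxE -expr2 sqrf_eq0 => /eqP.
Qed.

Lemma qformD a b (M N : 'M[R]_n) x :
  qform (a *: M + b *: N) x = a * qform M x + b * qform N x.
Proof. by rewrite /qform mulmxDr mulmxDl -!scalemxAr -!scalemxAl !mxE. Qed.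

Lemma qform_eigen (A : 'M[R]_n) l : root (char_poly A) l ->
  exists2 v, v != 0 & qform A v = l * sqnorm v.
Proof.
rewrite -eigenvalue_root_char => /eigenvalueP [v vA v_neq0].
by exists v => //; rewrite /qform vA -scalemxAl mxE.
Qed.

Lemma qform_ker (A : 'M[R]_n) z : z *m A = 0 -> qform A z = 0.
Proof. by rewrite /qform => ->; rewrite mul0mx mxE. Qed.

End QuadraticForm.

(* The spectral theorem is only available over a numClosedFieldType, so a real
   symmetric matrix is diagonalized as a Hermitian matrix over R[i]; the
   diagonal entries are real and are roots of the real characteristic polynomial. *)
Section SymmetricSpectral.
Local Open Scope sesquilinear_scope.
Variables (R : rcfType) (n : nat) (A : 'M[R]_n).
Hypothesis A_sym : symmetric_mx A.

Local Notation toC := (real_complex R).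
Local Notation AC := (map_mx toC A).
Local Notation P := (spectralmx AC).
Local Notation d := (spectral_diag AC).

Lemma real_complexM (a b : R) : toC (a * b) = toC a * toC b.
Proof. exact: rmorphM. Qed.

Lemma map_symmetric_hermsym : AC \is hermsymmx.
Proof.
apply: realsym_hermsym.
  apply/is_hermitianmxP; rewrite expr0 scale1r; apply/matrixP => i j.
  by rewrite !mxE -[in LHS]A_sym mxE.
by apply/mxOverP => i j; rewrite mxE; apply/complex_realP; exists (A i j).
Qed.

Lemma spectral_diag_real i : d 0 i = toC (complex.Re (d 0 i)).
Proof.
apply/esym/RRe_real/mxOverP.
exact: hermitian_spectral_diag_real map_symmetric_hermsym.
Qed.

Lemma spectral_mulmx : P *m AC = diag_mx d *m P.
Proof.
have /orthomx_spectralP AE := hermitian_normalmx map_symmetric_hermsym.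
by rewrite [X in P *m X]AE !mulmxA mulmxV ?spectral_unit // mul1mx.
Qed.

Lemma root_spectral_diag i : root (char_poly A) (complex.Re (d 0 i)).
Proof.
have : eigenvalue AC (d 0 i).
  apply/eigenvalueP; exists (row i P).
    by rewrite -row_mul spectral_mulmx mul_diag_mx; apply/rowP => j; rewrite !mxE.
  rewrite rowE mulmx_free_eq0 ?row_free_unit ?spectral_unit //.
  by apply/eqP => /matrixP /(_ 0 i); rewrite !mxE !eqxx => /eqP; rewrite oner_eq0.
by rewrite eigenvalue_root_char -map_char_poly spectral_diag_real fmorph_root.
Qed.

Lemma symmetric_has_root : (0 < n)%N -> exists r, root (char_poly A) r.
Proof.
by move=> n_gt0; exists (complex.Re (d 0 (Ordinal n_gt0))); apply: root_spectral_diag.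
Qed.

Lemma trmxC_map_real k l (M : 'M[R]_(k, l)) : (map_mx toC M)^t* = map_mx toC M^T.
Proof.
apply/matrixP => i j; rewrite !mxE conj_Creal //.
by apply/complex_realP; exists (M j i).
Qed.

Section Coordinates.
Variable x : 'rV[R]_n.
Local Notation y := (map_mx toC x *m P^t*).

Lemma trmxC_coordinates : y^t* = P *m (map_mx toC x)^t*.
Proof. by rewrite trmx_mul map_mxM trmxCK. Qed.

Lemma qform_spectral : toC (qform A x) = \sum_j d 0 j * (y 0 j * (y 0 j)^*).
Proof.
have AE : AC = P^t* *m diag_mx d *m P.
  rewrite -invmx_unitary ?spectral_unitarymx //.
  exact/orthomx_spectralP/hermitian_normalmx/map_symmetric_hermsym.
have -> : toC (qform A x) = (map_mx toC x *m AC *m (map_mx toC x)^t*) 0 0.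
  by rewrite trmxC_map_real -!map_mxM mxE.
rewrite [X in _ *m X *m _]AE !mulmxA -[_ *m P *m _]mulmxA -trmxC_coordinates.
rewrite mul_mx_diag mxE; apply: eq_bigr => j _.
by rewrite !mxE mulrCA mulrA.
Qed.

Lemma sqnorm_spectral : toC (sqnorm x) = \sum_j y 0 j * (y 0 j)^*.
Proof.
have -> : toC (sqnorm x) = (y *m y^t*) 0 0.
  rewrite trmxC_coordinates mulmxA mulmxKtV ?spectral_unitarymx //.
  by rewrite trmxC_map_real -map_mxM mxE.
by rewrite mxE; apply: eq_bigr => j _; rewrite !mxE.
Qed.
End Coordinates.

End SymmetricSpectral.

Section Rayleigh.
Variables (R : rcfType) (n : nat) (A : 'M[R]_n).
Hypothesis A_sym : symmetric_mx A.

Lemma rayleigh_lambda_min x : lambda_min A * sqnorm x <= qform A x.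
Proof.
rewrite -lecR real_complexM qform_spectral // (sqnorm_spectral A) mulr_sumr.
apply: ler_sum => j _; rewrite ler_wpM2r ?mul_conjC_ge0 //.
by rewrite spectral_diag_real // lecR lambda_min_le_root ?root_spectral_diag.
Qed.

Lemma rayleigh_lambda_max x : qform A x <= lambda_max A * sqnorm x.
Proof.
rewrite -lecR real_complexM qform_spectral // (sqnorm_spectral A) mulr_sumr.
apply: ler_sum => j _; rewrite ler_wpM2r ?mul_conjC_ge0 //.
by rewrite spectral_diag_real // lecR root_le_lambda_max ?root_spectral_diag.
Qed.

Hypothesis n_gt0 : (0 < n)%N.

Lemma lambda_max_eigen : exists2 v, v != 0 & qform A v = lambda_max A * sqnorm v.
Proof.
by have [r /root_lambda_max] := symmetric_has_root A_sym n_gt0; apply: qform_eigen.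
Qed.

Lemma lambda_min_eigen : exists2 v, v != 0 & qform A v = lambda_min A * sqnorm v.
Proof.
by have [r /root_lambda_min] := symmetric_has_root A_sym n_gt0; apply: qform_eigen.
Qed.

Lemma lambda_max_le u : (forall x, qform A x <= u * sqnorm x) -> lambda_max A <= u.
Proof.
have [v v_neq0 vE] := lambda_max_eigen.
by move=> /(_ v); rewrite vE ler_pM2r ?sqnorm_gt0.
Qed.

Lemma le_lambda_min u : (forall x, u * sqnorm x <= qform A x) -> u <= lambda_min A.
Proof.
have [v v_neq0 vE] := lambda_min_eigen.
by move=> /(_ v); rewrite vE ler_pM2r ?sqnorm_gt0.
Qed.

End Rayleigh.

Lemma le_lambda_max (R : rcfType) n (A : 'M[R]_n) u x : symmetric_mx A -> x != 0 ->
  u * sqnorm x <= qform A x -> u <= lambda_max A.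
Proof.
move=> A_sym x_neq0 /le_trans /(_ (rayleigh_lambda_max A_sym x)).
by rewrite ler_pM2r ?sqnorm_gt0.
Qed.

Lemma lambda_min_le (R : rcfType) n (A : 'M[R]_n) u x : symmetric_mx A -> x != 0 ->
  qform A x <= u * sqnorm x -> lambda_min A <= u.
Proof.
move=> A_sym x_neq0 /(le_trans (rayleigh_lambda_min A_sym x)).
by rewrite ler_pM2r ?sqnorm_gt0.
Qed.

Lemma spd_lambda_min_gt0 (R : rcfType) n (A : 'M[R]_n) : (0 < n)%N -> spd_mx A ->
  0 < lambda_min A.
Proof.
move=> n_gt0 [A_sym A_pd]; have [v v_neq0 vE] := lambda_min_eigen A_sym n_gt0.
by have := A_pd v v_neq0; rewrite -/(qform A v) vE pmulr_lgt0 ?sqnorm_gt0.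
Qed.

Lemma spd_lambda_max_gt0 (R : rcfType) n (A : 'M[R]_n) : (0 < n)%N -> spd_mx A ->
  0 < lambda_max A.
Proof.
move=> n_gt0 [A_sym A_pd]; have [v v_neq0 vE] := lambda_max_eigen A_sym n_gt0.
by have := A_pd v v_neq0; rewrite -/(qform A v) vE pmulr_lgt0 ?sqnorm_gt0.
Qed.

Lemma symmetric_mxD (R : rcfType) n a b (M N : 'M[R]_n) :
  symmetric_mx M -> symmetric_mx N -> symmetric_mx (a *: M + b *: N).
Proof. by move=> M_sym N_sym; rewrite /symmetric_mx linearD !linearZ /= M_sym N_sym. Qed.

Lemma rank_deficient_ker (F : fieldType) n (A : 'M[F]_n) :
  (\rank A < n)%N -> exists2 z : 'rV_n, z != 0 & z *m A = 0.
Proof.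
move=> rkA; have /rowV0Pn[z] : kermx A != 0 by rewrite kermx_eq0 /row_free neq_ltn rkA.
by rewrite sub_kermx => /eqP zA z_neq0; exists z.
Qed.

Section Mixture.
Variables (R : rcfType) (n : nat) (a b : R) (M N : 'M[R]_n).
Hypotheses (n_gt0 : (0 < n)%N) (a_ge0 : 0 <= a) (b_ge0 : 0 <= b).
Hypotheses (M_sym : symmetric_mx M) (N_sym : symmetric_mx N).
Hypothesis N_psd : forall x, 0 <= qform N x.
Local Notation B := (a *: M + b *: N).
Let B_sym : symmetric_mx B := symmetric_mxD a b M_sym N_sym.

Lemma lambda_max_mix_le : lambda_max B <= a * lambda_max M + b * lambda_max N.
Proof.
apply: lambda_max_le => // x; rewrite qformD mulrDl -!mulrA.
by rewrite lerD // ler_wpM2l // rayleigh_lambda_max.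
Qed.

Lemma lambda_max_mix_ge : a * lambda_min M + b * lambda_max N <= lambda_max B.
Proof.
have [v v_neq0 vE] := lambda_max_eigen N_sym n_gt0.
apply: (le_lambda_max B_sym v_neq0); rewrite qformD vE mulrDl -!mulrA.
by rewrite lerD // ler_wpM2l // rayleigh_lambda_min.
Qed.

Lemma lambda_max_mix_ge_psd : a * lambda_max M <= lambda_max B.
Proof.
have [v v_neq0 vE] := lambda_max_eigen M_sym n_gt0.
apply: (le_lambda_max B_sym v_neq0); rewrite qformD vE -mulrA lerDl.
by rewrite mulr_ge0.
Qed.

Lemma lambda_min_mix_ge_psd : a * lambda_min M <= lambda_min B.
Proof.
apply: le_lambda_min => // x; rewrite qformD -mulrA ler_wpDr ?mulr_ge0 //.
by rewrite ler_wpM2l // rayleigh_lambda_min.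
Qed.

Lemma lambda_min_mix_le : lambda_min B <= a * lambda_min M + b * lambda_max N.
Proof.
have [v v_neq0 vE] := lambda_min_eigen M_sym n_gt0.
apply: (lambda_min_le B_sym v_neq0); rewrite qformD vE mulrDl -!mulrA.
by rewrite lerD // ler_wpM2l // rayleigh_lambda_max.
Qed.

Lemma lambda_min_mix_le_ker (z : 'rV[R]_n) :
  z != 0 -> z *m N = 0 -> lambda_min B <= a * lambda_max M.
Proof.
move=> z_neq0 zN; apply: (lambda_min_le B_sym z_neq0).
by rewrite qformD (qform_ker zN) mulr0 addr0 -mulrA ler_wpM2l // rayleigh_lambda_max.
Qed.

End Mixture.

Lemma ler_pdiv (R : numFieldType) (x y u v : R) :
  0 <= u -> 0 < v -> x <= u -> v <= y -> x / y <= u / v.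
Proof.
move=> u_ge0 v_gt0 xu vy; have y_gt0 := lt_le_trans v_gt0 vy.
apply: le_trans (_ : u / y <= _); first by rewrite ler_pM2r ?invr_gt0.
by apply: ler_wpM2l => //; rewrite lef_pV2 ?posrE.
Qed.

Lemma cond_num_mix_bounds (R : realFieldType) (a b a1 an p1 b1 bn : R) :
  0 < a -> 0 < a1 -> 0 < an ->
  b1 <= a * a1 + b * p1 -> a * an + b * p1 <= b1 -> a * a1 <= b1 ->
  a * an <= bn -> bn <= a * a1 -> bn <= a * an + b * p1 ->
  let c := (a1 / an)^-1 + b * p1 / (a * a1) in
  Num.max c c^-1 <= b1 / bn /\ b1 / bn <= a1 / an * (1 + b * p1 / (a * a1)).
Proof.
move=> a_gt0 a1_gt0 an_gt0 b1_le_sum b1_ge_sum b1_ge bn_ge bn_le bn_le_sum c.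
have bn_gt0 : 0 < bn by apply: lt_le_trans bn_ge; rewrite mulr_gt0.
have b1_ge0 : 0 <= b1 by apply: le_trans b1_ge; rewrite mulr_ge0 ?ltW.
have cE : c = (a * an + b * p1) / (a * a1).
  by rewrite /c; field; rewrite !gt_eqF.
have kE : a1 / an * (1 + b * p1 / (a * a1)) = (a * a1 + b * p1) / (a * an).
  by field; rewrite !gt_eqF.
rewrite cE invf_div kE ge_max !ler_pdiv //.
- exact: le_trans b1_le_sum.
- by rewrite mulr_gt0.
Qed.

Theorem lemma2 (R : rcfType) (n : nat) (hn : (1 <= n)%N) (beta : R)
    (B0 Pf : 'M[R]_n) :
  0 <= beta -> beta < 1 ->
  spd_mx B0 -> spsd_mx Pf -> rank_deficient Pf ->
  let B := (1 - beta) *: B0 + beta *: Pf in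
  let c := (cond_num B0)^-1 + beta * lambda_max Pf / ((1 - beta) * lambda_max B0) in
  Num.max c c^-1 <= cond_num B /\
  cond_num B <= cond_num B0 * (1 + beta * lambda_max Pf / ((1 - beta) * lambda_max B0)).
Proof.
move=> beta_ge0 beta_lt1 B0_spd [Pf_sym Pf_psd] /rank_deficient_ker[z z_neq0 zPf].
have a_gt0 : 0 < 1 - beta by rewrite subr_gt0.
have [B0_sym _] := B0_spd.
have a_ge0 := ltW a_gt0.
apply: cond_num_mix_bounds.
- exact: a_gt0.
- exact: spd_lambda_max_gt0.
- exact: spd_lambda_min_gt0.
- exact: lambda_max_mix_le.
- exact: lambda_max_mix_ge.
- exact: lambda_max_mix_ge_psd.
- exact: lambda_min_mix_ge_psd.
- exact: lambda_min_mix_le_ker zPf.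
- exact: lambda_min_mix_le.
Qed.
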